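(* For any connected graph $G$ of order $n\ge 3$, $3\le \gamma_{qtR}(G)\le n$. Moreover: (i) $\gamma_{qtR}(G)=3$ if and only if $G$ has maximum degree $n-1$; (ii) $\gamma_{qtR}(G)=4$ if and only if $\gamma(G)=\gamma_t(G)=2$; (iii) $\gamma_{qtR}(G)=n$ if and only if $G$ is a path or a cycle of order at least three.
   Context: All graphs are finite, simple and undirected; $\gamma(G)$ is the domination number and $\gamma_t(G)$ the total domination number (minimum size of a set $S$ such that every vertex has a neighbor in $S$). For $f:V(G)\to\{0,1,2\}$ write $V_i=\{v:f(v)=i\}$; weight $\omega(f)=|V_1|+2|V_2|$. A quasi-total Roman dominating function (QTRDF) is an $f$ such that every vertex labeled $0$ is adjacent to a vertex labeled $2$, and every vertex isolated in the subgraph induced by $V_1\cup V_2$ has label $1$; $\gamma_{qtR}(G)$ is the minimum weight of a QTRDF. *)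

(* A finite simple graph = symmetric irreflexive relation e on a finType T. *)
From mathcomp Require Import all_boot.
Set Implicit Arguments. Unset Strict Implicit. Unset Printing Implicit Defensive.

Section Graphs.
Variables (T : finType) (e : rel T).

Definition dominating (S : {set T}) : bool :=
  [forall v, (v \in S) || [exists u, e v u && (u \in S)]].

Definition total_dominating (S : {set T}) : bool :=
  [forall v, [exists u, e v u && (u \in S)]].

(* domination number (minimum over dominating sets; T itself dominates) *)
Definition dom_number : nat :=
  \big[minn/#|T|]_(S : {set T} | dominating S) #|S|.

(* total domination number (default #|T| is never used for graphs
   without isolated vertices, where T itself totally dominates) *)
Definition tdom_number : nat :=
  \big[minn/#|T|]_(S : {set T} | total_dominating S) #|S|.

Definition weight (f : {ffun T -> 'I_3}) : nat := \sum_(v : T) (f v : nat).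

Definition qtrdf (f : {ffun T -> 'I_3}) : bool :=
  [forall v, ((f v : nat) == 0) ==> [exists u, e v u && ((f u : nat) == 2)]] &&
  [forall v, (((f v : nat) != 0) && [forall u, e v u ==> ((f u : nat) == 0)])
              ==> ((f v : nat) == 1)].

(* quasi-total Roman domination number (the constant-1 function is a QTRDF,
   so the default value 2*#|T| is never attained) *)
Definition qtR_number : nat :=
  \big[minn/(2 * #|T|)]_(f : {ffun T -> 'I_3} | qtrdf f) weight f.

Definition degree (v : T) : nat := #|[set u | e v u]|.

Definition is_path_graph : Prop :=
  exists p : 'I_#|T| -> T, bijective p /\
    forall i j : 'I_#|T|, e (p i) (p j) = ((i : nat).+1 == j) || ((j : nat).+1 == i).

Definition is_cycle_graph : Prop :=
  exists p : 'I_#|T| -> T, bijective p /\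
    forall i j : 'I_#|T|, e (p i) (p j) =
      [|| (i : nat).+1 == j, (j : nat).+1 == i,
          ((i : nat) == 0) && ((j : nat) == #|T|.-1)
        | ((j : nat) == 0) && ((i : nat) == #|T|.-1)].

End Graphs.

From mathcomp Require Import all_boot all_order zify.
From Stdlib Require Import Lia.

Set Implicit Arguments.
Unset Strict Implicit.
Unset Printing Implicit Defensive.

(* Writing V_i for the vertices labelled i, a QTRDF has weight n + |V_2| - |V_0|.
   Every vertex of V_0 has a neighbour in V_2 and every vertex of V_2 has a
   neighbour outside V_0, so when all degrees are at most 2, sending a vertex of
   V_0 to a neighbour in V_2 is injective and the weight is at least n.
   Conversely a vertex v of degree d > 0 gives the QTRDF labelling v by 2, one
   neighbour of v by 1, the other neighbours by 0 and everything else by 1, of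
   weight n + 2 - d.  Hence gamma_qtR = n exactly when the maximum degree is at
   most 2, which for a connected graph means (via a Hamiltonian walk) that it is
   a path or a cycle, and gamma_qtR = 3 exactly when some vertex is universal.
   An optimal QTRDF of weight 3 or 4 either has no label 2 (then n = 3 or 4 and
   the graph is a path or a cycle) or has a vertex labelled 2 whose neighbour
   and the few remaining labels force a universal vertex, respectively a total
   dominating pair; conversely a minimum total dominating set labelled 2 is a
   QTRDF, so gamma_qtR <= 2 gamma_t. *)

Section BigMinn.
Variables (I : finType) (P : pred I) (F : I -> nat) (d : nat).

Lemma bigminn_le_cond i : P i -> \big[minn/d]_(j | P j) F j <= F i.
Proof. exact: (@Order.TotalTheory.bigmin_le_cond _ nat). Qed.

Lemma bigminn_geq m :
  m <= d -> (forall i, P i -> m <= F i) -> m <= \big[minn/d]_(j | P j) F j.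
Proof. by move=> md mF; apply/(@Order.TotalTheory.bigmin_geP _ nat). Qed.

Lemma bigminn_attained i0 :
  P i0 -> F i0 <= d -> exists2 i, P i & \big[minn/d]_(j | P j) F j = F i.
Proof.
move=> Pi0 Fi0d; case: (@arg_minnP _ i0 P F Pi0) => i Pi Fmin.
exists i => //; apply/eqP; rewrite eqn_leq bigminn_le_cond //=.
by apply: bigminn_geq => //; apply: leq_trans (Fmin _ Pi0) Fi0d.
Qed.

End BigMinn.

Lemma ord3_cases (x : 'I_3) : [\/ (x : nat) = 0, (x : nat) = 1 | (x : nat) = 2].
Proof. by case: x => -[|[|[|]]] //= _; [constructor 1 | constructor 2 | constructor 3]. Qed.

Lemma uniq_full_nth (T : finType) (x0 : T) (s : seq T) x :
  uniq s -> size s = #|T| -> exists2 k, k < #|T| & x = nth x0 s k.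
Proof.
move=> us sn; have xs : x \in s.
  apply: contraT => xs.
  by have := max_card (mem (x :: s)); rewrite (card_uniqP _) /= ?xs ?us // sn ltnn.
by exists (index x s); rewrite ?nth_index // -sn index_mem.
Qed.

Lemma sum_bool_card (T : finType) (P : pred T) : \sum_v (P v : nat) = #|[set v | P v]|.
Proof. by rewrite -sum1dep_card [RHS]big_mkcond; apply: eq_bigr => v _; case: (P v). Qed.

Section Graph.
Variables (T : finType) (e : rel T).
Hypotheses (e_sym : symmetric e) (e_irr : irreflexive e).
Hypothesis e_conn : forall x y : T, connect e x y.

Lemma adj_neq x y : e x y -> x != y.
Proof. by apply: contraTneq => ->; rewrite e_irr. Qed.

Definition universal v := forall u, u != v -> e v u.

Lemma degree_universal v : degree e v = #|T| - 1 <-> universal v.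
Proof.
have sub : [set u | e v u] \subset [set~ v].
  by apply/subsetP => u; rewrite !inE eq_sym; apply: adj_neq.
rewrite /degree subn1 -(cardsC1 v); split => [/subset_cardP/(_ sub) E u uv | U].
  by have := E u; rewrite !inE uv.
apply: eq_card => u; rewrite !inE; apply/idP/idP; last exact: U.
by rewrite eq_sym; apply: adj_neq.
Qed.

Lemma degree_gt2P v :
  reflect (exists a b c, [/\ e v a, e v b & e v c] /\ [/\ a != b, b != c & c != a])
          (2 < degree e v).
Proof.
apply: (iffP card_gt2P) => -[a [b [c [abc neq]]]]; exists a, b, c;
  by rewrite !inE in abc *.
Qed.

Lemma tdom_number_ge2 : 1 < #|T| -> 2 <= tdom_number e.
Proof.
move=> n_gt1; apply: bigminn_geq => // S /forallP tdS.
rewrite ltnNge; apply/negP => /card_le1_eqP S1.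
have /card_gt0P[x _] := ltnW n_gt1.
have /existsP[u /andP[_ uS]] := tdS x; have /existsP[w /andP[uw wS]] := tdS u.
by move: uw; rewrite (S1 _ _ uS wS) e_irr.
Qed.

Lemma dom_number_ge2 : 1 < #|T| -> (forall v, ~ universal v) -> 2 <= dom_number e.
Proof.
move=> n_gt1 nU; apply: bigminn_geq => // S /forallP dS.
rewrite ltnNge; apply/negP => /card_le1_eqP S1.
have [v vS] : exists v, v \in S.
  have /card_gt0P[x _] := ltnW n_gt1.
  by case/orP: (dS x) => [xS | /existsP[u /andP[_ uS]]]; [exists x | exists u].
apply: (nU v) => u uv; case/orP: (dS u) => [uS | /existsP[w /andP[uw wS]]].
  by move: uv; rewrite (S1 _ _ uS vS) eqxx.
by rewrite (S1 _ _ wS vS) e_sym.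
Qed.

Lemma dom_number_le1 v : universal v -> dom_number e <= 1.
Proof.
move=> U; rewrite -(cards1 v); apply: bigminn_le_cond; apply/forallP => w.
case: (eqVneq w v) => [->|wv]; first by rewrite set11.
by apply/orP; right; apply/existsP; exists v; rewrite set11 e_sym U.
Qed.

Lemma dom_tdom_pair a b :
  1 < #|T| -> (forall v, ~ universal v) -> (forall w, e w a || e w b) ->
  dom_number e = 2 /\ tdom_number e = 2.
Proof.
move=> n_gt1 nU ab.
have tdS : total_dominating e [set a; b].
  apply/forallP => w; apply/existsP.
  by case/orP: (ab w) => ?; [exists a | exists b]; rewrite !inE eqxx ?orbT andbT.
have dS : dominating e [set a; b] by apply/forallP => w; rewrite (forallP tdS w) orbT.
have card_ab : #|[set a; b]| <= 2 by rewrite cards2; case: (a != b).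
split; apply/eqP; rewrite eqn_leq.
  by rewrite dom_number_ge2 // andbT (leq_trans _ card_ab) // bigminn_le_cond.
by rewrite tdom_number_ge2 // andbT (leq_trans _ card_ab) // bigminn_le_cond.
Qed.

Definition qtr_labelling (g : T -> nat) : Prop :=
  (forall v, g v = 0 -> exists2 u, e v u & g u = 2) /\
  (forall v, g v = 2 -> exists2 u, e v u & g u != 0).

Lemma qtrdfP (f : {ffun T -> 'I_3}) : reflect (qtr_labelling (fun v => f v)) (qtrdf e f).
Proof.
apply: (iffP andP) => [[/forallP Q0 /forallP Q2] | [Q0 Q2]]; split.
- move=> v /eqP fv0; have /existsP[u /andP[vu /eqP fu]] := implyP (Q0 v) fv0.
  by exists u.
- move=> v fv2; have := Q2 v; rewrite fv2 /= implybF negb_forall => /existsP[u].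
  by rewrite negb_imply => /andP[vu fu]; exists u.
- apply/forallP => v; apply/implyP => /eqP/Q0[u vu fu].
  by apply/existsP; exists u; rewrite vu fu.
- apply/forallP => v; apply/implyP => /andP[fv0 /forallP N].
  case: (ord3_cases (f v)) => [fv | -> // | /Q2[u vu]]; first by rewrite fv in fv0.
  by move=> /negPf fu; have := N u; rewrite vu fu.
Qed.

Lemma weight_labels (f : {ffun T -> 'I_3}) :
  weight f + #|[set v | (f v : nat) == 0]| = #|T| + #|[set v | (f v : nat) == 2]|.
Proof.
rewrite -!sum_bool_card -sum1_card /weight -!big_split /=.
by apply: eq_bigr => v _; case: (ord3_cases (f v)) => ->.
Qed.

Lemma weight_ge_seq (f : {ffun T -> 'I_3}) (s : seq T) :
  uniq s -> \sum_(v <- s) (f v : nat) <= weight f.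
Proof.
by move=> us; rewrite big_uniq // big_mkcond; apply: leq_sum => v _; case: ifP.
Qed.

Lemma qtR_number_le (f : {ffun T -> 'I_3}) : qtrdf e f -> qtR_number e <= weight f.
Proof. exact: bigminn_le_cond. Qed.

Lemma qtR_number_le_labelling (g : T -> nat) :
  (forall v, g v < 3) -> qtr_labelling g -> qtR_number e <= \sum_v g v.
Proof.
move=> g_lt3 [Q0 Q2]; pose f : {ffun T -> 'I_3} := [ffun v => inord (g v)].
have fE v : (f v : nat) = g v by rewrite ffunE inordK.
rewrite (eq_bigr (fun v => f v : nat)) => [|v _]; last by rewrite fE.
apply/qtR_number_le/qtrdfP; split=> v; rewrite !fE.
  by case/Q0=> u vu gu; exists u; rewrite ?fE.
by case/Q2=> u vu gu; exists u; rewrite ?fE.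
Qed.

Lemma qtR_number_le_card : qtR_number e <= #|T|.
Proof.
by rewrite -sum1_card; apply: qtR_number_le_labelling (fun _ => 1) _ _.
Qed.

Lemma qtR_number_attained : exists2 f, qtrdf e f & qtR_number e = weight f.
Proof.
pose f1 : {ffun T -> 'I_3} := [ffun=> inord 1].
have f1E v : (f1 v : nat) = 1 by rewrite ffunE inordK.
apply: (bigminn_attained (i0 := f1)); first by apply/qtrdfP; split=> v; rewrite f1E.
by rewrite /weight (eq_bigr (fun=> 1)) ?sum1_card ?leq_pmull // => v _; rewrite f1E.
Qed.

Lemma qtrdf_weight_no_two (f : {ffun T -> 'I_3}) :
  qtrdf e f -> (forall v, (f v : nat) != 2) -> weight f = #|T|.
Proof.
case/qtrdfP=> Q0 _ no2; rewrite -sum1_card; apply: eq_bigr => v _.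
case: (ord3_cases (f v)) => [/Q0[u _ fu] | // | fv].
  by have := no2 u; rewrite fu.
by have := no2 v; rewrite fv.
Qed.

Lemma qtrdf_weight_ge3 (f : {ffun T -> 'I_3}) : 2 < #|T| -> qtrdf e f -> 3 <= weight f.
Proof.
move=> n_gt2 qf; case: (boolP [exists v, (f v : nat) == 2]) => [|/existsPn no2].
  case/existsP=> v /eqP fv; case/qtrdfP: (qf) => _ /(_ v fv)[u vu fu].
  have := weight_ge_seq f (s := [:: v; u]).
  rewrite /= inE adj_neq // !big_cons big_nil fv => /(_ isT).
  by rewrite -lt0n in fu; lia.
by rewrite qtrdf_weight_no_two // => v; apply: no2.
Qed.

Lemma qtR_number_ge3 : 2 < #|T| -> 3 <= qtR_number e.
Proof. by move=> n_gt2; have [f qf ->] := qtR_number_attained; apply: qtrdf_weight_ge3. Qed.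

Lemma qtR_number_le_degree v : 0 < degree e v -> qtR_number e + degree e v <= #|T| + 2.
Proof.
case/card_gt0P=> a; rewrite inE => va; have av : a != v by rewrite eq_sym adj_neq.
pose g w := if w == v then 2 else if w == a then 1 else if e v w then 0 else 1.
have qg : qtr_labelling g.
  split=> w; rewrite /g.
    case: (eqVneq w v) => // wv; case: (eqVneq w a) => // wa.
    by case: ifP => // vw _; exists v; rewrite ?eqxx // e_sym.
  case: (eqVneq w v) => [-> _ | wv]; last by case: ifP => //; case: ifP.
  by exists a; rewrite // (negbTE av) eqxx.
have g_deg : \sum_w g w + degree e v = #|T| + 2.
  have one (x : T) : \sum_w (w == x : nat) = 1.
    by rewrite (bigD1 x) //= eqxx big1 // => w /negPf ->.
  rewrite -[2]/(1 + 1) -{1}(one v) -(one a).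
  rewrite /degree -sum_bool_card -sum1_card -!big_split /=.
  apply: eq_bigr => w _; rewrite /g; case: (eqVneq w v) => [->|wv].
    by rewrite e_irr (negbTE (adj_neq va)).
  by case: (eqVneq w a) => [->|wa]; [rewrite va | case: (e v w)].
apply: leq_trans (_ : \sum_w g w + degree e v <= _); last by rewrite g_deg.
by rewrite leq_add2r qtR_number_le_labelling // => w; rewrite /g; repeat case: ifP.
Qed.

Lemma qtR_number_le_tdom :
  (forall v, exists u, e v u) -> qtR_number e <= 2 * tdom_number e.
Proof.
move=> nbr; have [S tdS ->] : exists2 S, total_dominating e S & tdom_number e = #|S|.
  apply: (bigminn_attained (i0 := setT)); last by rewrite cardsT.
  by apply/forallP => v; have [u vu] := nbr v; apply/existsP; exists u; rewrite vu inE.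
pose g w := if w \in S then 2 else 0.
have S_nbr w : exists2 u, e w u & g u = 2.
  by have /existsP[u /andP[wu uS]] := forallP tdS w; exists u; rewrite /g ?uS.
apply: leq_trans (qtR_number_le_labelling (g := g) _ _) _.
- by move=> w; rewrite /g; case: ifP.
- by split=> w _; have [u wu gu] := S_nbr w; exists u; rewrite ?gu.
by rewrite -big_mkcond sum_nat_const mulnC.
Qed.

Lemma boundary_edge (S : {set T}) x y :
  x \in S -> y \notin S -> exists a b, [/\ a \in S, b \notin S & e a b].
Proof.
move=> xS; case/connectP: (e_conn x y) => p + ->; elim: p x xS => [|z p IHp] x xS /=.
  by rewrite xS.
case/andP=> xz zp; case zS: (z \in S); first exact: IHp.
by exists x, z; rewrite zS.
Qed.

Lemma exists_neighbor x : 1 < #|T| -> exists y, e x y.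
Proof.
move=> n_gt1; have /card_gt0P[y] : 0 < #|[set~ x]| by rewrite cardsC1 -subn1 subn_gt0.
rewrite !inE => yx; have := @boundary_edge [set x] x y.
by rewrite !inE eqxx yx => /(_ isT isT)[_ [b [/set1P-> _ xb]]]; exists b.
Qed.

Section MaxDegreeTwo.
Hypothesis deg2 : forall v, degree e v <= 2.

Lemma degree_le2_nbr v a b x : e v a -> e v b -> a != b -> e v x -> x = a \/ x = b.
Proof.
move=> va vb ab vx; case: (eqVneq x a) => [|xa]; [by left | right].
apply/eqP; apply: contraTT (deg2 v) => xb; rewrite -ltnNge.
by apply/degree_gt2P; exists a, b, x; split; split; rewrite // eq_sym.
Qed.

Lemma qtrdf_weight_ge_card (f : {ffun T -> 'I_3}) : qtrdf e f -> #|T| <= weight f.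
Proof.
case/qtrdfP=> Q0 Q2.
set V0 := [set v | (f v : nat) == 0]; set V2 := [set v | (f v : nat) == 2].
pose h v := odflt v [pick u | e v u && ((f u : nat) == 2)].
have hP v : v \in V0 -> e v (h v) /\ (f (h v) : nat) = 2.
  rewrite inE => /eqP/Q0[u vu fu]; rewrite /h.
  by case: pickP => [x /andP[vx /eqP fx] | /(_ u)] //=; rewrite vu fu eqxx.
have h_inj : {in V0 &, injective h}.
  move=> x y xV0 yV0 hxy; have [xh fh] := hP x xV0; have [yh _] := hP y yV0.
  have [z hz fz] := Q2 _ fh.
  move: xV0 yV0; rewrite !inE => /eqP fx /eqP fy.
  have xz : x != z by apply: contraNneq fz => <-; rewrite fx.
  have hx : e (h x) x by rewrite e_sym.
  have hy : e (h x) y by rewrite hxy e_sym.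
  have [//|yz] := degree_le2_nbr hx hz xz hy.
  by move: fz; rewrite -yz fy.
have V02 : #|V0| <= #|V2|.
  rewrite -(card_in_imset h_inj); apply/subset_leq_card/subsetP => _ /imsetP[v vV0 ->].
  by rewrite inE (proj2 (hP v vV0)).
by have := weight_labels f; rewrite -/V0 -/V2; lia.
Qed.

Variable x0 : T.

Definition walk (s : seq T) := forall i, i.+1 < size s -> e (nth x0 s i) (nth x0 s i.+1).

Lemma walk_interior_nbr s i x :
  uniq s -> walk s -> 0 < i -> i.+1 < size s -> e (nth x0 s i) x ->
  x = nth x0 s i.-1 \/ x = nth x0 s i.+1.
Proof.
move=> us ws i_gt0 i_lt sx; apply: degree_le2_nbr sx => //.
- by rewrite e_sym -{2}(prednK i_gt0); apply: ws; rewrite prednK // ltnW.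
- exact: ws.
- by rewrite nth_uniq //; lia.
Qed.

Lemma walk_interior_adj s i j :
  uniq s -> walk s -> 0 < i -> i.+1 < size s -> j < size s ->
  e (nth x0 s i) (nth x0 s j) -> j = i.-1 \/ j = i.+1.
Proof.
move=> us ws i_gt0 i_lt j_lt /(walk_interior_nbr us ws i_gt0 i_lt).
by case=> /eqP; rewrite nth_uniq //; lia.
Qed.

Lemma walk_extend s :
  uniq s -> walk s -> 0 < size s < #|T| ->
  exists2 s', uniq s' /\ walk s' & size s' = (size s).+1.
Proof.
move=> us ws /andP[s_gt0 s_lt].
have [y ys] : exists y, y \notin s.
  apply/existsP; rewrite -negb_forall; apply: contraTN s_lt => /forallP s_all.
  rewrite -leqNgt (leq_trans _ (card_size s)) // subset_leq_card //.
  by apply/subsetP => z _; apply: s_all.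
have := @boundary_edge [set z in s] (nth x0 s 0) y.
rewrite !inE mem_nth // ys => /(_ isT isT)[a [b]]; rewrite !inE => -[aS bS ab].
have ai : nth x0 s (index a s) = a := nth_index x0 aS.
have i_lt : index a s < size s by rewrite index_mem.
case: (eqVneq (index a s).+1 (size s)) => [i_last | i_nlast].
  exists (rcons s b); last by rewrite size_rcons.
  split=> [|j]; first by rewrite rcons_uniq bS us.
  rewrite size_rcons ltnS => j_lt; rewrite !nth_rcons j_lt.
  case: (ltnP j.+1 (size s)) => [|j_ge]; first exact: ws.
  have jE : j = index a s by apply/eqP; rewrite -eqSS i_last eqn_leq j_lt.
  by rewrite jE i_last eqxx ai.
case: (posnP (index a s)) => [i0 | i_gt0].
  exists (b :: s) => //; split=> [|[|j]] /=; first by rewrite bS us.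
    by rewrite -i0 ai e_sym.
  by rewrite ltnS; apply: ws.
have i_int : (index a s).+1 < size s by rewrite ltn_neqAle i_nlast.
rewrite -ai in ab; case: (walk_interior_nbr us ws i_gt0 i_int ab) => bE;
  by rewrite bE mem_nth in bS; lia.
Qed.

Lemma hamiltonian_walk : 0 < #|T| -> exists2 s, uniq s /\ walk s & size s = #|T|.
Proof.
move=> n_gt0; suff walk_k k : 0 < k <= #|T| -> exists2 s, uniq s /\ walk s & size s = k.
  by apply: walk_k; rewrite n_gt0 leqnn.
elim: k => [// | [|k] IHk] /andP[_ k_le]; first by exists [:: x0].
have [s [us ws] sk] := IHk (ltnW k_le).
have s_bounds : 0 < size s < #|T| by rewrite sk.
have [s' ws' s'k] := walk_extend us ws s_bounds.
by exists s' => //; rewrite s'k sk.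
Qed.

Lemma walk_chord s i j :
  uniq s -> walk s -> i < j -> j < size s -> e (nth x0 s i) (nth x0 s j) ->
  j = i.+1 \/ i = 0 /\ j = (size s).-1.
Proof.
move=> us ws ij j_lt sij; case: (posnP i) => [i0 | i_gt0].
  rewrite i0 in ij sij *; case: (ltnP j.+1 (size s)) => [j_int | j_last].
    rewrite e_sym in sij; have := walk_interior_adj us ws ij j_int _ sij; lia.
  by right; split=> //; lia.
by have := walk_interior_adj us ws i_gt0 (leq_ltn_trans ij j_lt) j_lt sij; lia.
Qed.

Lemma walk_adjE s i j :
  uniq s -> walk s -> i < size s -> j < size s ->
  e (nth x0 s i) (nth x0 s j) =
  [|| i.+1 == j, j.+1 == i |
      e (nth x0 s 0) (nth x0 s (size s).-1) &&
      ((i == 0) && (j == (size s).-1) || (j == 0) && (i == (size s).-1))].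
Proof.
move=> us ws i_lt j_lt; apply/idP/idP => [sij|].
  case: (ltngtP i j) => [ij | ji | ij]; last by rewrite ij e_irr in sij.
    case: (walk_chord us ws ij j_lt sij) => [-> | [i0 jl]]; first by rewrite eqxx.
    by rewrite -i0 -jl sij i0 jl !eqxx !orbT.
  rewrite e_sym in sij; case: (walk_chord us ws ji i_lt sij) => [-> | [j0 il]].
    by rewrite eqxx orbT.
  by rewrite -j0 -il sij j0 il !eqxx !orbT.
case/or3P=> [/eqP ij | /eqP ji | /andP[s0l /orP[] /andP[/eqP-> /eqP->]]] //.
- by rewrite -ij; apply: ws; rewrite ij.
- by rewrite -ji e_sym; apply: ws; rewrite ji.
- by rewrite e_sym.
Qed.

Lemma degree_le2_path_or_cycle : 0 < #|T| -> is_path_graph e \/ is_cycle_graph e.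
Proof.
move=> n_gt0; have [s [us ws] sn] := hamiltonian_walk n_gt0.
pose p (i : 'I_#|T|) := nth x0 s i.
have p_bij : bijective p.
  apply: inj_card_bij; last by rewrite card_ord.
  by move=> i j /eqP; rewrite nth_uniq ?sn // => /eqP/val_inj.
case c: (e (nth x0 s 0) (nth x0 s #|T|.-1)); [right | left]; exists p; split=> // i j;
  by rewrite /p walk_adjE ?sn // c ?orbF.
Qed.

End MaxDegreeTwo.

Lemma qtR_number_eq_card : qtR_number e = #|T| <-> forall v, degree e v <= 2.
Proof.
split=> [qn v | deg2].
  case: (posnP (degree e v)) => [-> // | dpos].
  by have := qtR_number_le_degree dpos; rewrite qn; lia.
apply/eqP; rewrite eqn_leq qtR_number_le_card /=.
by have [f qf ->] := qtR_number_attained; apply: qtrdf_weight_ge_card.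
Qed.

Lemma degree_le2_of_indexing (p : 'I_#|T| -> T) :
  bijective p ->
  (forall i, exists a b, forall j, e (p i) (p j) -> (j : nat) = a \/ (j : nat) = b) ->
  forall v, degree e v <= 2.
Proof.
case=> q pK qK two v; rewrite leqNgt; apply/degree_gt2P => -[a [b [c [[va vb vc] [ab bc ca]]]]].
have [x [y xy]] := two (q v).
have idx w : e v w -> (q w : nat) = x \/ (q w : nat) = y.
  by rewrite -{1}(qK v) -{1}(qK w); apply: xy.
have q_neq w w' : w != w' -> (q w : nat) != q w'.
  by apply: contra => /eqP/val_inj/(can_inj qK)->.
move: (q_neq _ _ ab) (q_neq _ _ bc) (q_neq _ _ ca) (idx a va) (idx b vb) (idx c vc).
lia.
Qed.

Lemma path_or_cycle_degree_le2 : is_path_graph e \/ is_cycle_graph e -> forall v, degree e v <= 2.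
Proof.
case=> -[p [p_bij pE]]; apply: (degree_le2_of_indexing p_bij) => i.
  by exists i.+1, i.-1 => j; rewrite pE; lia.
exists (if (i : nat) == #|T|.-1 then 0 else i.+1), (if (i : nat) == 0 then #|T|.-1 else i.-1).
by move=> j; rewrite pE; have := ltn_ord i; have := ltn_ord j; case: ifP; case: ifP; lia.
Qed.

Section TwoLabelledVertex.
Variables (f : {ffun T -> 'I_3}) (v u : T).
Hypotheses (qf : qtrdf e f) (fv : (f v : nat) = 2) (vu : e v u).

Let uv : u != v. Proof. by rewrite eq_sym adj_neq. Qed.

Lemma weight_ge_triple x : x != v -> x != u -> 2 + (f u : nat) + f x <= weight f.
Proof.
move=> xv xu; have := weight_ge_seq f (s := [:: v; u; x]).
by rewrite /= !inE !negb_or eq_sym uv eq_sym xv eq_sym xu !big_cons big_nil fv addn0 addnA => ->.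
Qed.

Lemma weight3_universal : weight f <= 3 -> (f u : nat) != 0 -> universal v.
Proof.
move=> w3 fu w wv; case: (eqVneq w u) => [-> // | wu].
have small x : x != v -> x != u -> (f u : nat) + f x <= 1.
  by move=> xv xu; have := weight_ge_triple xv xu; lia.
case/qtrdfP: qf => /(_ w) Q0 _.
have [|x wx fx] := Q0; first by have := small w wv wu; lia.
case: (eqVneq x v) => [xv | xv]; first by rewrite e_sym -xv.
case: (eqVneq x u) => [xu | xu]; last by have := small x xv xu; lia.
by have := small w wv wu; rewrite -xu fx; lia.
Qed.

Lemma weight4_pair_two : weight f <= 4 -> (f u : nat) = 2 -> forall w, e w v || e w u.
Proof.
move=> w4 fu w; case: (eqVneq w v) => [-> | wv]; first by rewrite vu orbT.
case: (eqVneq w u) => [-> | wu]; first by rewrite e_sym vu.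
have zero x : x != v -> x != u -> (f x : nat) = 0.
  by move=> xv xu; have := weight_ge_triple xv xu; lia.
case/qtrdfP: qf => /(_ w (zero w wv wu)) [x wx fx] _.
case: (eqVneq x v) => [<- | xv]; first by rewrite wx.
case: (eqVneq x u) => [<- | xu]; first by rewrite wx orbT.
by rewrite zero in fx.
Qed.

Lemma weight4_pair_one :
  1 < #|T| -> (forall x, ~ universal x) -> weight f <= 4 -> (f u : nat) = 1 ->
  exists a b, forall w, e w a || e w b.
Proof.
move=> n_gt1 nU w4 fu; case/qtrdfP: qf => Q0 _.
(* [v] is the only vertex labelled 2, so every vertex but a non-neighbour [u']
   of [v] is adjacent to [v]; a neighbour of [u'] completes the pair. *)
have [u' u'v vu'] : exists2 u', u' != v & ~~ e v u'.
  case: (boolP [exists x, (x != v) && ~~ e v x]) => [/existsP[x /andP[]] | /existsPn all].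
    by exists x.
  by case: (nU v) => x xv; have := all x; rewrite xv negbK.
have le1 x : x != v -> (f x : nat) <= 1.
  move=> xv; case: (eqVneq x u) => [-> | xu]; first by rewrite fu.
  by have := weight_ge_triple xv xu; lia.
have zero_adj x : (f x : nat) = 0 -> e x v.
  case/Q0=> y xy fy; case: (eqVneq y v) => [<- // | yv].
  by have := le1 y yv; rewrite fy.
have fu' : (f u' : nat) != 0 by apply: contraNneq vu' => /zero_adj; rewrite e_sym.
have u'u : u' != u by apply: contraNneq vu' => ->.
have adj_v w : w != v -> w != u' -> e w v.
  move=> wv wu'; case: (eqVneq w u) => [-> | wu]; first by rewrite e_sym.
  apply: zero_adj; have := weight_ge_seq f (s := [:: v; u; u'; w]).
  rewrite /= !inE !negb_or eq_sym uv eq_sym u'v eq_sym wv eq_sym u'u eq_sym wu eq_sym wu'.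
  by rewrite !big_cons big_nil fv fu => /(_ isT); lia.
have [x u'x] := exists_neighbor u' n_gt1.
have xv : x != v by apply: contraNneq vu' => <-; rewrite e_sym.
have xu' : x != u' by rewrite eq_sym adj_neq.
exists v, x => w; case: (eqVneq w v) => [-> | wv]; first by rewrite e_irr /= e_sym adj_v.
case: (eqVneq w u') => [-> | wu']; first by rewrite u'x orbT.
by rewrite adj_v.
Qed.

End TwoLabelledVertex.

Lemma qtR_number_eq3 : 2 < #|T| -> qtR_number e = 3 <-> exists v, universal v.
Proof.
move=> n_gt2; split=> [q3 | [v U]].
  have [f qf wf] := qtR_number_attained; rewrite q3 in wf.
  case: (boolP [exists v, (f v : nat) == 2]) => [/existsP[v /eqP fv] | /existsPn no2].
    case/qtrdfP: (qf) => _ /(_ v fv)[u vu fu].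
    by exists v; apply: weight3_universal qf fv vu _ fu; rewrite -wf.
  have n3 : #|T| = 3 by rewrite -(qtrdf_weight_no_two qf) // -wf.
  have /card_gt0P[x0 _] : 0 < #|T| by rewrite n3.
  have deg2 : forall v, degree e v <= 2 by apply/qtR_number_eq_card; rewrite q3 n3.
  have [s [us ws] sn] := hamiltonian_walk deg2 x0 (ltnW (ltnW n_gt2)).
  exists (nth x0 s 1) => w; have [k + ->] := uniq_full_nth x0 w us sn.
  rewrite n3; case: k => [|[|[|//]]] _; rewrite ?eqxx // => _.
    by rewrite e_sym ws ?sn ?n3.
  by rewrite ws ?sn ?n3.
have dv : degree e v = #|T| - 1 by apply/degree_universal.
have /qtR_number_le_degree : 0 < degree e v by rewrite dv subn_gt0 ltnW.
by rewrite dv => le3; apply/eqP; rewrite eqn_leq qtR_number_ge3 // andbT; lia.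
Qed.

Lemma qtR_number4_dom_tdom :
  2 < #|T| -> qtR_number e = 4 -> dom_number e = 2 /\ tdom_number e = 2.
Proof.
move=> n_gt2 q4; have n_gt1 := ltnW n_gt2.
have nU v : ~ universal v.
  by move=> U; have := proj2 (qtR_number_eq3 n_gt2) (ex_intro _ v U); rewrite q4.
have [f qf wf] := qtR_number_attained; rewrite q4 in wf.
case: (boolP [exists v, (f v : nat) == 2]) => [/existsP[v /eqP fv] | /existsPn no2].
  case/qtrdfP: (qf) => _ /(_ v fv)[u vu fu]; have w4 : weight f <= 4 by rewrite -wf.
  case: (ord3_cases (f u)) => [fu0 | fu1 | fu2]; first by rewrite fu0 in fu.
    have [a [b ab]] := weight4_pair_one qf fv vu n_gt1 nU w4 fu1.
    exact: dom_tdom_pair ab.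
  exact: dom_tdom_pair (weight4_pair_two qf fv vu w4 fu2).
have n4 : #|T| = 4 by rewrite -(qtrdf_weight_no_two qf) // -wf.
have /card_gt0P[x0 _] : 0 < #|T| by rewrite n4.
have deg2 : forall v, degree e v <= 2 by apply/qtR_number_eq_card; rewrite q4 n4.
have [s [us ws] sn] := hamiltonian_walk deg2 x0 (ltnW n_gt1).
apply: (@dom_tdom_pair (nth x0 s 1) (nth x0 s 2)) => // w.
have [k + ->] := uniq_full_nth x0 w us sn.
rewrite n4; case: k => [|[|[|[|//]]]] _.
- by rewrite ws ?sn ?n4.
- by rewrite ws ?orbT ?sn ?n4.
- by rewrite e_sym ws ?sn ?n4.
- by rewrite orbC e_sym ws ?sn ?n4.
Qed.

Lemma qtR_number_eq4 :
  2 < #|T| -> qtR_number e = 4 <-> dom_number e = 2 /\ tdom_number e = 2.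
Proof.
move=> n_gt2; split=> [|[d2 t2]]; first exact: qtR_number4_dom_tdom.
have nU v : ~ universal v by move/dom_number_le1; rewrite d2.
have le4 : qtR_number e <= 2 * tdom_number e.
  by apply: qtR_number_le_tdom => x; apply/exists_neighbor/ltnW.
have ne3 : qtR_number e != 3.
  by apply/eqP => /(qtR_number_eq3 n_gt2)[v /nU].
by move: le4; rewrite t2; have := qtR_number_ge3 n_gt2; lia.
Qed.

End Graph.

Theorem mainTheorem7 (T : finType) (e : rel T)
    (e_sym : symmetric e) (e_irr : irreflexive e)
    (e_conn : forall x y : T, connect e x y)
    (n_ge3 : 3 <= #|T|) :
  3 <= qtR_number e /\ qtR_number e <= #|T| /\
  (qtR_number e = 3 <-> exists v : T, degree e v = #|T| - 1) /\
  (qtR_number e = 4 <-> dom_number e = 2 /\ tdom_number e = 2) /\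
  (qtR_number e = #|T| <-> is_path_graph e \/ is_cycle_graph e).
Proof.
have n_gt0 : 0 < #|T| by apply: leq_trans n_ge3.
have /card_gt0P[x0 _] := n_gt0.
split; first exact: qtR_number_ge3.
split; first exact: qtR_number_le_card.
split.
  rewrite qtR_number_eq3 //.
  by split=> -[v]; exists v; apply/degree_universal.
split; first exact: qtR_number_eq4.
rewrite qtR_number_eq_card //; split=> [deg2 | ]; last exact: path_or_cycle_degree_le2.
exact: degree_le2_path_or_cycle deg2 x0 n_gt0.
Qed.
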